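(* Let $G$ be an abelian Hausdorff topological group, $A\subseteq G\setminus\{0\}$, and let $K_A:S_A\to G$ be the associated Kalton map. (i) If $A$ is topologically independent in $G$, then $K_A$ is an open map onto $\langle A\rangle$ (i.e. $K_A:S_A\to\langle A\rangle$ is open, where $\langle A\rangle$ carries the subspace topology). (ii) If $K_A$ is a topologically isomorphic embedding, then $A$ is topologically independent in $G$.
   Context: For $a\in G$, $\langle a\rangle$ is the cyclic subgroup generated by $a$ with the subspace topology, and $\langle A\rangle$ is the subgroup generated by $A$. $S_A=\bigoplus_{a\in A}\langle a\rangle$ is the subgroup of finitely supported elements of $\prod_{a\in A}\langle a\rangle$, with the subspace topology of the Tychonoff product topology. The Kalton map $K_A:S_A\to G$ is the unique homomorphism extending each inclusion $\langle a\rangle\to G$. $A$ is topologically independent if $0\notin A$ and for every neighbourhood $W$ of $0$ there is a neighbourhood $U$ of $0$ such that for every finite $F\subseteq A$ and all integers $\{z_a:a\in F\}$, $\sum_{a\in F}z_aa\in U$ implies $z_aa\in W$ for all $a\in F$. *)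

From HB Require Import structures.
From mathcomp Require Import all_boot all_order all_algebra.
From mathcomp Require Import all_classical all_reals all_analysis.
Set Implicit Arguments. Unset Strict Implicit. Unset Printing Implicit Defensive.
Import Order.TTheory GRing.Theory Num.Theory.
Local Open Scope classical_set_scope.
Local Open Scope ring_scope.

Section Kalton.
Variable G : topologicalZmodType.

Definition cyclic_sub (a : G) : set G := [set a *~ n | n in [set: int]].

Definition gen_sub (A : set G) : set G :=
  [set x | exists (s : seq G) (z : G -> int),
      (forall a, a \in s -> A a) /\ x = \sum_(a <- s) a *~ z a].

(* S_A = bigoplus_{a in A} <a>, realised inside the Tychonoff product
   {ptws G -> G} (coordinates indexed by G, forced to be 0 off A) *)
Definition S_sub (A : set G) : set {ptws G -> G} :=
  [set f | (forall a, A a -> cyclic_sub a (f a)) /\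
           (forall a, ~ A a -> f a = 0) /\
           finite_set [set a | f a != 0]].

Definition Kalton (A : set G) (f : {ptws G -> G}) : G := \sum_(a \in A) f a.

Definition top_indep (A : set G) : Prop :=
  ~ A 0 /\
  forall W : set G, nbhs (0 : G) W ->
    exists U : set G, nbhs (0 : G) U /\
      forall (F : seq G) (z : G -> int),
        uniq F -> (forall a, a \in F -> A a) ->
        U (\sum_(a <- F) a *~ z a) ->
        forall a, a \in F -> W (a *~ z a).
End Kalton.

Definition sub_open_map (X Y : topologicalType) (D : set X) (E : set Y)
    (f : X -> Y) : Prop :=
  forall O : set X, open O ->
    exists O' : set Y, open O' /\ f @` (D `&` O) = E `&` O'.

Definition sub_continuous (X Y : topologicalType) (D : set X) (f : X -> Y) : Prop :=
  forall O' : set Y, open O' ->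
    exists O : set X, open O /\ D `&` f @^-1` O' = D `&` O.

Definition top_iso_embedding (X Y : topologicalType) (D : set X) (f : X -> Y) : Prop :=
  {in D &, injective f} /\ sub_continuous D f /\ sub_open_map D (f @` D) f.

From Pilot Require Import Defs.
From HB Require Import structures.
From mathcomp Require Import all_boot all_order all_algebra.
From mathcomp Require Import all_classical all_reals all_analysis.
Import Order.TTheory GRing.Theory Num.Theory.
Local Open Scope classical_set_scope.
Local Open Scope ring_scope.
Set Implicit Arguments. Unset Strict Implicit. Unset Printing Implicit Defensive.

(* Every element of S_A is a finitely supported vector of multiples
   (a *~ z a), so K_A maps S_A onto <A>, additively.  A basic neighbourhood
   in S_A bounds finitely many coordinates by a neighbourhood W of 0;
   topological independence yields U such that K_A f in U puts every
   coordinate of f in W, and translating gives openness of K_A.  Conversely,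
   if K_A is an embedding, continuity at 0 bounds all coordinates outside a
   finite set B (test it on single-coordinate vectors), while openness and
   injectivity bound the coordinates in B. *)

Section KaltonAlgebra.
Variables (G : topologicalZmodType) (A : set G).
Implicit Types (f g : {ptws G -> G}) (r : seq G) (z : G -> int).

Definition S_elem r z : {ptws G -> G} :=
  fun a => if a \in r then a *~ z a else 0.

Lemma Kalton_seqE f r : uniq r -> [set` r] `<=` A ->
  (forall a, A a -> a \notin r -> f a = 0) -> Kalton A f = \sum_(a <- r) f a.
Proof.
move=> ur rA f0; rewrite /Kalton (fsbigE r) // big_seq_cond [RHS]big_seq.
by apply: eq_bigl => a; case: (boolP (a \in r)) => //= /rA/mem_set->.
Qed.

Lemma S_subP f :
  S_sub A f <-> exists r z, [/\ uniq r, [set` r] `<=` A & f = S_elem r z].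
Proof.
split=> [[fc [f0 /finite_seqP[s supp]]]|[r [z [ur rA ->]]]].
  have /choice[z fz] : forall a, exists n : int, f a = a *~ n.
    move=> a; case: (pselect (A a)) => [/fc[n _ <-]|Aa]; first by exists n.
    by exists 0; rewrite f0.
  have supp_s a : (a \in s) = (f a != 0).
    apply/idP/idP => h.
      by move: (h : [set` s] a); rewrite -supp.
    by move: (h : [set a | f a != 0] a); rewrite supp.
  exists (undup s), z; split; first exact: undup_uniq.
    move=> a /=; rewrite mem_undup supp_s => fa.
    by apply: contrapT => Aa; move: fa; rewrite f0 ?eqxx.
  apply: funext => a; rewrite /S_elem mem_undup supp_s fz.
  by case: eqP => // ->.
split; [|split].
- move=> a _; rewrite /S_elem; case: ifP => _; first by exists (z a).
  by exists 0; rewrite ?mulr0z.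
- by move=> a Aa; rewrite /S_elem; case: ifP => // /rA.
- apply: (@sub_finite_set _ _ [set` r]); last exact: finite_seq.
  by move=> a /=; rewrite /S_elem; case: ifP; rewrite ?eqxx.
Qed.

Lemma Kalton_S_elem r z : uniq r -> [set` r] `<=` A ->
  Kalton A (S_elem r z) = \sum_(a <- r) a *~ z a.
Proof.
move=> ur rA; rewrite (Kalton_seqE ur rA) => [|a _ ar].
  by apply: eq_big_seq => a ar; rewrite /S_elem ar.
by rewrite /S_elem (negbTE ar).
Qed.

Lemma S_subB f g : S_sub A f -> S_sub A g -> S_sub A (f \- g).
Proof.
move=> [fc [f0 ffin]] [gc [g0 gfin]]; split; [|split].
- move=> a Aa /=; have [m _ <-] := fc a Aa; have [n _ <-] := gc a Aa.
  by exists (m - n); rewrite // mulrzBr.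
- by move=> a Aa; rewrite /= f0 // g0 // subrr.
- apply: (@sub_finite_set _ _ ([set a | f a != 0] `|` [set a | g a != 0])).
    move=> a /= fga; have [fa|] := eqVneq (f a) 0; [right|by left].
    by apply: contraNneq fga => ga; rewrite fa ga subrr.
  by rewrite finite_setU.
Qed.

Lemma Kalton_subB f g : S_sub A f -> S_sub A g ->
  Kalton A (f \- g) = Kalton A f - Kalton A g.
Proof.
move=> /S_subP[r [z [ur rA ->]]] /S_subP[r' [z' [ur' rA' ->]]].
have uR := undup_uniq (r ++ r').
have RA : [set` undup (r ++ r')] `<=` A.
  by move=> a /=; rewrite mem_undup mem_cat => /orP[/rA|/rA'].
rewrite !(Kalton_seqE uR RA) ?sumrB // => a _;
  rewrite mem_undup mem_cat negb_or => /andP[ar ar'];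
  by rewrite /= /S_elem ?(negbTE ar) ?(negbTE ar') ?subrr.
Qed.

Lemma S_sub0 : S_sub A 0.
Proof. by apply/S_subP; exists [::], (fun=> 0); split. Qed.

Lemma Kalton0 : Kalton A 0 = 0.
Proof. by rewrite (@Kalton_seqE _ [::]) ?big_nil. Qed.

Lemma Kalton_image : Kalton A @` S_sub A = gen_sub A.
Proof.
rewrite eqEsubset; split=> x.
  by case=> f /S_subP[r [z [ur rA ->]]] <-; exists r, z; rewrite Kalton_S_elem.
case=> s [z [sA ->]].
pose zs a := z a * (count_mem a s)%:Z.
have usA : [set` undup s] `<=` A by move=> a /=; rewrite mem_undup; exact: sA.
exists (S_elem (undup s) zs).
  by apply/S_subP; exists (undup s), zs; split; rewrite ?undup_uniq.
rewrite Kalton_S_elem ?undup_uniq // -[in RHS]big_undup_iterop_count.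
by apply: eq_bigr => a _; rewrite /zs mulrzA.
Qed.

Lemma top_indep_coordP : ~ A 0 ->
  top_indep A <-> forall W, nbhs (0 : G) W ->
    exists U : set G, nbhs (0 : G) U /\
    forall f, S_sub A f -> U (Kalton A f) -> forall a, W (f a).
Proof.
move=> nA0; split=> [[_ indep] W W0|coord].
  have [U [U0 HU]] := indep W W0; exists U.
  split=> // f /S_subP[r [z [ur rA ->]]].
  rewrite Kalton_S_elem // => Ur a; rewrite /S_elem.
  by case: ifP => [ar|_]; [exact: (HU r z ur rA Ur)|exact: nbhs_singleton].
split=> // W W0; have [U [U0 HU]] := coord W W0.
exists U; split=> // F z uF FA UF a aF.
have SF : S_sub A (S_elem F z) by apply/S_subP; exists F, z; split.
by have := HU _ SF; rewrite Kalton_S_elem // => /(_ UF a); rewrite /S_elem aF.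
Qed.

End KaltonAlgebra.

Section Translation.
Variable G : topologicalZmodType.

Lemma nbhs_translate0 (x : G) (V : set G) :
  nbhs x V -> nbhs (0 : G) [set w | V (x + w)].
Proof.
have : (fun w : G => x + w) @ nbhs (0 : G) --> x.
  rewrite -[x in _ --> x]addr0.
  apply: (@continuous_comp _ _ _ (fun w : G => (x, w))
    (fun p : G * G => p.1 + p.2)).
    by apply: cvg_pair; [exact: cvg_cst|exact: cvg_id].
  exact: add_continuous.
by apply.
Qed.

Lemma nbhs0_translate (x : G) (U : set G) :
  nbhs (0 : G) U -> nbhs x [set y | U (y - x)].
Proof.
have : (fun y : G => y - x) @ nbhs x --> (0 : G).
  rewrite -(subrr x).
  apply: (@continuous_comp _ _ _ (fun y : G => (y, x))
    (fun p : G * G => p.1 - p.2)).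
    by apply: cvg_pair; [exact: cvg_id|exact: cvg_cst].
  exact: sub_continuous.
by apply.
Qed.

End Translation.

Section Cylinders.
Variables (X : eqType) (G : topologicalZmodType).
Implicit Types f g : {ptws X -> G}.

Definition cylinder_nbhs f0 : set_system {ptws X -> G} :=
  [set P | exists (B : seq X) (W : set G), nbhs (0 : G) W /\
     forall g, (forall b, b \in B -> W (g b - f0 b)) -> P g].

Lemma cylinder_nbhs_filter f0 : Filter (cylinder_nbhs f0).
Proof.
split.
- by exists [::], setT; split; first exact: filterT.
- move=> P Q [B1 [W1 [W10 HP]]] [B2 [W2 [W20 HQ]]].
  exists (B1 ++ B2), (W1 `&` W2); split; first exact: filterI.
  move=> g HB; split; [apply: HP|apply: HQ] => b bB;
    by case: (HB b); rewrite // mem_cat bB ?orbT.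
- by move=> P Q PQ [B [W [W0 HP]]]; exists B, W; split=> // g /HP/PQ.
Qed.

Lemma cylinder_nbhs_cvg f0 : cylinder_nbhs f0 --> f0.
Proof.
have cyl_filter := cylinder_nbhs_filter f0.
apply/cvg_sup => b; apply/cvg_image => //.
  by rewrite eqEsubset; split=> y // _; exists (fun _ => y).
move=> V /= Vf0b; exists [set g : {ptws X -> G} | V (g b)].
  exists [:: b], [set w | V (f0 b + w)]; split; first exact: nbhs_translate0.
  by move=> g /(_ b (mem_head _ _)); rewrite /= subrKC.
by rewrite eqEsubset; split=> y; [case=> g ? <-|exists (fun _ => y)].
Qed.

Lemma open_cylinder (Y : topologicalType) (B : seq X) (V : set Y) : open V ->
  open [set h : {ptws X -> Y} | forall b, b \in B -> V (h b)].
Proof.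
move=> oV; elim: B => [|b B IH].
  rewrite (_ : [set h | _] = setT); first exact: openT.
  by apply/seteqP; split=> h.
rewrite (_ : [set h | _] =
    proj b @^-1` V `&` [set h | forall c, c \in B -> V (h c)]).
  by apply: openI => //; apply: open_comp => // f _; exact: proj_continuous.
apply/seteqP; split=> h /=.
  by move=> HB; split=> [|c cB]; apply: HB; rewrite inE ?eqxx ?cB ?orbT.
by case=> Vb VB c; rewrite inE => /orP[/eqP->|/VB].
Qed.

End Cylinders.

Lemma subspace_open_of_nbhs (Y : topologicalType) (E P : set Y) : P `<=` E ->
  (forall y, P y -> exists2 V, nbhs y V & E `&` V `<=` P) ->
  exists O, open O /\ P = E `&` O.
Proof.
move=> PE loc; exists [set y | exists2 V, nbhs y V & E `&` V `<=` P]; split.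
  rewrite openE => y [V yV EVP]; apply: filterS (nbhs_interior yV) => w wV.
  by exists V.
apply/seteqP; split=> y; first by move=> Py; split; [exact: PE|exact: loc].
by case=> Ey [V yV]; apply; split=> //; exact: nbhs_singleton.
Qed.

Section KaltonTopology.
Variables (G : topologicalZmodType) (A : set G).

Lemma Kalton_open_at (f0 : {ptws G -> G}) (O : set {ptws G -> G}) :
  top_indep A -> S_sub A f0 -> nbhs f0 O ->
  exists2 V, nbhs (Kalton A f0) V &
    gen_sub A `&` V `<=` Kalton A @` (S_sub A `&` O).
Proof.
move=> indep Sf0 /cylinder_nbhs_cvg[B [W [W0 HO]]].
have [U [U0 HU]] := (top_indep_coordP indep.1).1 indep W W0.
exists [set y | U (y - Kalton A f0)]; first exact: nbhs0_translate.
move=> y []; rewrite -Kalton_image => -[h Sh <-] Uh.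
exists h => //; split=> //; apply: HO => b _.
by apply: (HU (h \- f0)); [exact: S_subB|rewrite Kalton_subB].
Qed.

Lemma Kalton_sub_open_map :
  top_indep A -> sub_open_map (S_sub A) (gen_sub A) (Kalton A).
Proof.
move=> indep O oO; apply: subspace_open_of_nbhs.
  by rewrite -Kalton_image; apply: image_subset => f [].
move=> _ [f0 [Sf0 Of0] <-]; apply: Kalton_open_at => //.
exact: open_nbhs_nbhs.
Qed.

(* The library lemma [sub_continuous] (continuity of subtraction) shadows the
   definition of the same name. *)
Lemma Kalton_continuous_coord : Defs.sub_continuous (S_sub A) (Kalton A) ->
  forall W, nbhs (0 : G) W ->
  exists B : seq G, forall f, S_sub A f -> forall a, a \notin B -> W (f a).
Proof.
move=> cont W W0; have [Q [oQ SQ]] := cont _ (open_interior W).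
have Q0 : Q 0.
  have : (S_sub A `&` Kalton A @^-1` W°) 0.
    by split; [exact: S_sub0|rewrite /= Kalton0].
  by rewrite SQ => -[].
have [B [W1 [W10 HQ]]] := cylinder_nbhs_cvg (open_nbhs_nbhs (conj oQ Q0)).
exists B => _ /S_subP[r [z [ur rA ->]]] a aB; rewrite /S_elem.
case: ifP => ar; last exact: nbhs_singleton.
have a1A : [set` [:: a]] `<=` A.
  by move=> b /=; rewrite inE => /eqP->; exact: rA.
have : (S_sub A `&` Q) (S_elem [:: a] z).
  split; first by apply/S_subP; exists [:: a], z.
  apply: HQ => b bB; rewrite /S_elem inE.
  have /negbTE-> : b != a by apply: contraNneq aB => <-.
  by rewrite subr0; exact: nbhs_singleton.
rewrite -SQ => -[_ /=].
by rewrite Kalton_S_elem // big_seq1 => /interior_subset.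
Qed.

Lemma Kalton_open_coord : {in S_sub A &, injective (Kalton A)} ->
  sub_open_map (S_sub A) (Kalton A @` S_sub A) (Kalton A) ->
  forall (B : seq G) W, nbhs (0 : G) W -> exists U : set G, nbhs (0 : G) U /\
    forall f, S_sub A f -> U (Kalton A f) -> forall b, b \in B -> W (f b).
Proof.
move=> inj opn B W W0.
have [U [oU SU]] := opn _ (open_cylinder B (open_interior W)).
have U0 : U 0.
  have : (Kalton A @` (S_sub A `&` [set h | forall b, b \in B -> W° (h b)])) 0.
    by exists 0; [split=> [|b _]; [exact: S_sub0|]|exact: Kalton0].
  by rewrite SU => -[].
exists U; split=> [|f Sf Uf b bB]; first exact: open_nbhs_nbhs.
have : (Kalton A @` S_sub A `&` U) (Kalton A f) by split; [exists f|].
rewrite -SU => -[h [Sh hB] hf].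
rewrite -(inj h f (mem_set Sh) (mem_set Sf) hf).
exact: interior_subset (hB b bB).
Qed.

End KaltonTopology.

Theorem proposition4p7 (G : topologicalZmodType) (A : set G) :
  hausdorff_space G -> ~ A 0 ->
  (top_indep A ->
     Kalton A @` S_sub A = gen_sub A /\
     sub_open_map (S_sub A) (gen_sub A) (Kalton A)) /\
  (top_iso_embedding (S_sub A) (Kalton A) -> top_indep A).
Proof.
move=> _ nA0; split=> [indep|[inj [cont opn]]].
  by split; [exact: Kalton_image|exact: Kalton_sub_open_map].
apply/(top_indep_coordP nA0) => W W0.
have [B HB] := Kalton_continuous_coord cont W0.
have [U [U0 HU]] := Kalton_open_coord inj opn B W0.
exists U; split=> // f Sf Uf a.
by case: (boolP (a \in B)) => aB; [exact: HU|exact: HB].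
Qed.
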